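(* Let $a,b,c,q>0$, $0<p<1$, and consider $$\frac{dx}{dt}=x\left[\frac{(1-x)(x-p)}{1+qy}-ay\right],\qquad \frac{dy}{dt}=by\,(1-y-cx).$$ Define $A_1=ac^2q+1$, $A_2=-(2acq+ac+p+1)$, $A_3=a+aq+p$, $\Delta=A_2^2-4A_1A_3$. When $\Delta>0$ put $x_1=\frac{-A_2-\sqrt\Delta}{2A_1}$, $x_2=\frac{-A_2+\sqrt\Delta}{2A_1}$, $E_{1*}=(x_1,1-cx_1)$, $E_{2*}=(x_2,1-cx_2)$; when $\Delta=0$ put $x_3=-\frac{A_2}{2A_1}$ and $E_{3*}=(x_3,1-cx_3)$. Then the positive equilibria (equilibria with both coordinates positive) of the system are as follows. Case I: $\Delta>0$. (1) If $2A_1+A_2>0$: (a) if $0<c<1$, there are exactly two positive equilibria $E_{1*}$ and $E_{2*}$; (b) if $c=1$, there is exactly one positive equilibrium $E_{1*}$; (c) if $1<c\le \frac1q+1$ and $0<p<\frac1c$, there is exactly one positive equilibrium $E_{1*}$. (2) If $2A_1+A_2<0$, $1<c<\frac1q+1$ and $0<p<\frac1c$, there is exactly one positive equilibrium $E_{1*}$. (3) If $2A_1+A_2=0$, $c>1$ and $0<p<\frac1c$, there is exactly one positive equilibrium $E_{1*}$. Case II: if $\Delta=0$, $2A_1+A_2>0$ and $0<c<1$, there is exactly one positive equilibrium $E_{3*}$.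
   Context: The quadratic $A_1x^2+A_2x+A_3=0$ is obtained by eliminating $y=1-cx$ from the equations $(1-x)(x-p)/(1+qy)-ay=0$ and $1-y-cx=0$; its real roots give the $x$-coordinates of the interior equilibria. *)

From Stdlib Require Import Reals Lra.
Open Scope R_scope.

Definition fx (a p q x y : R) : R := x * ((1 - x) * (x - p) / (1 + q * y) - a * y).
Definition fy (b c x y : R) : R := b * y * (1 - y - c * x).

Definition pos_equilibrium (a b c p q x y : R) : Prop :=
  0 < x /\ 0 < y /\ fx a p q x y = 0 /\ fy b c x y = 0.

Definition Acoef1 (a c q : R) : R := a * c ^ 2 * q + 1.
Definition Acoef2 (a c p q : R) : R := - (2 * a * c * q + a * c + p + 1).
Definition Acoef3 (a p q : R) : R := a + a * q + p.
Definition Delta_disc (a c p q : R) : R := (Acoef2 a c p q) ^ 2 - 4 * Acoef1 a c q * Acoef3 a p q.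

Definition xstar1 (a c p q : R) : R := (- Acoef2 a c p q - sqrt (Delta_disc a c p q)) / (2 * Acoef1 a c q).
Definition xstar2 (a c p q : R) : R := (- Acoef2 a c p q + sqrt (Delta_disc a c p q)) / (2 * Acoef1 a c q).
Definition xstar3 (a c p q : R) : R := - Acoef2 a c p q / (2 * Acoef1 a c q).

Definition Estar1 (a c p q : R) : R * R := (xstar1 a c p q, 1 - c * xstar1 a c p q).
Definition Estar2 (a c p q : R) : R * R := (xstar2 a c p q, 1 - c * xstar2 a c p q).
Definition Estar3 (a c p q : R) : R * R := (xstar3 a c p q, 1 - c * xstar3 a c p q).

From Stdlib Require Import Reals Lra Psatz.
Open Scope R_scope.

(* Substituting the prey isocline y = 1 - c x into the x-equation leaves the
   quadratic A1 x^2 + A2 x + A3, whose roots x1 <= x2 are both positive since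
   A1 > 0 > A2 and A3 > 0.  A root gives a positive equilibrium exactly when
   1 - c x > 0, and by Vieta A1 (1 - c x1) (1 - c x2) = A1 + c A2 + c^2 A3 = (1 - c)(1 - p c).
   The sign of this product, together with x1 < 1 when 2 A1 + A2 > 0, decides which
   of 1 - c x1, 1 - c x2 are positive in each case. *)

Definition root_lo (A1 A2 A3 : R) : R := (- A2 - sqrt (A2 ^ 2 - 4 * A1 * A3)) / (2 * A1).
Definition root_hi (A1 A2 A3 : R) : R := (- A2 + sqrt (A2 ^ 2 - 4 * A1 * A3)) / (2 * A1).

Section QuadraticRoots.

Variables A1 A2 A3 : R.
Hypothesis hA1 : 0 < A1.

Lemma root_lo_add_root_hi : A1 * (root_lo A1 A2 A3 + root_hi A1 A2 A3) = - A2.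
Proof. unfold root_lo, root_hi; field; lra. Qed.

Lemma root_lo_mul_root_hi :
  0 <= A2 ^ 2 - 4 * A1 * A3 -> A1 * (root_lo A1 A2 A3 * root_hi A1 A2 A3) = A3.
Proof.
  intro hD; unfold root_lo, root_hi.
  set (s := sqrt (A2 ^ 2 - 4 * A1 * A3)).
  assert (hs : s * s = A2 ^ 2 - 4 * A1 * A3) by (apply sqrt_sqrt; exact hD).
  replace (A1 * ((- A2 - s) / (2 * A1) * ((- A2 + s) / (2 * A1))))
    with ((A2 ^ 2 - s * s) / (4 * A1)) by (field; lra).
  rewrite hs; field; lra.
Qed.

Lemma quadratic_factor (x : R) : 0 <= A2 ^ 2 - 4 * A1 * A3 ->
  A1 * x ^ 2 + A2 * x + A3 = A1 * (x - root_lo A1 A2 A3) * (x - root_hi A1 A2 A3).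
Proof.
  intro hD.
  transitivity (A1 * x ^ 2 - A1 * (root_lo A1 A2 A3 + root_hi A1 A2 A3) * x
                + A1 * (root_lo A1 A2 A3 * root_hi A1 A2 A3)).
  - rewrite root_lo_add_root_hi, (root_lo_mul_root_hi hD); ring.
  - ring.
Qed.

Lemma quadratic_eq0_iff (x : R) : 0 <= A2 ^ 2 - 4 * A1 * A3 ->
  A1 * x ^ 2 + A2 * x + A3 = 0 <-> x = root_lo A1 A2 A3 \/ x = root_hi A1 A2 A3.
Proof.
  intro hD; rewrite (quadratic_factor x hD); split.
  - intro h; destruct (Rmult_integral _ _ h) as [h' | h'].
    + destruct (Rmult_integral _ _ h'); [lra | left; lra].
    + right; lra.
  - intros [-> | ->]; ring.
Qed.

Lemma root_lo_lt_root_hi :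
  0 < A2 ^ 2 - 4 * A1 * A3 -> root_lo A1 A2 A3 < root_hi A1 A2 A3.
Proof.
  intro hD; unfold root_lo, root_hi, Rdiv.
  apply Rmult_lt_compat_r; [apply Rinv_0_lt_compat; lra |].
  pose proof (sqrt_lt_R0 _ hD); lra.
Qed.

Lemma root_lo_le_root_hi : root_lo A1 A2 A3 <= root_hi A1 A2 A3.
Proof.
  unfold root_lo, root_hi, Rdiv.
  apply Rmult_le_compat_r; [left; apply Rinv_0_lt_compat; lra |].
  pose proof (sqrt_pos (A2 ^ 2 - 4 * A1 * A3)); lra.
Qed.

Lemma root_lo_pos : A2 < 0 -> 0 < A3 -> 0 <= A2 ^ 2 - 4 * A1 * A3 -> 0 < root_lo A1 A2 A3.
Proof.
  intros hA2 hA3 hD; unfold root_lo.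
  apply Rdiv_lt_0_compat; [| lra].
  pose proof (sqrt_sqrt _ hD) as hs; pose proof (sqrt_pos (A2 ^ 2 - 4 * A1 * A3)).
  set (s := sqrt (A2 ^ 2 - 4 * A1 * A3)) in *.
  nra.
Qed.

(* The smaller root lies left of the vertex -A2 / (2 A1). *)
Lemma root_lo_lt_1 : 0 < 2 * A1 + A2 -> root_lo A1 A2 A3 < 1.
Proof.
  intro hv.
  assert (h2 : 2 * A1 * root_lo A1 A2 A3 = - A2 - sqrt (A2 ^ 2 - 4 * A1 * A3))
    by (unfold root_lo; field; lra).
  pose proof (sqrt_pos (A2 ^ 2 - 4 * A1 * A3)); nra.
Qed.

Lemma root_lo_disc0 : A2 ^ 2 - 4 * A1 * A3 = 0 -> root_lo A1 A2 A3 = - A2 / (2 * A1).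
Proof. intro hD; unfold root_lo; rewrite hD, sqrt_0; field; lra. Qed.

Lemma root_hi_disc0 : A2 ^ 2 - 4 * A1 * A3 = 0 -> root_hi A1 A2 A3 = - A2 / (2 * A1).
Proof. intro hD; unfold root_hi; rewrite hD, sqrt_0; field; lra. Qed.

Lemma reciprocal_quadratic_factor (c : R) : 0 <= A2 ^ 2 - 4 * A1 * A3 ->
  A1 * (1 - c * root_lo A1 A2 A3) * (1 - c * root_hi A1 A2 A3) = A1 + c * A2 + c ^ 2 * A3.
Proof.
  intro hD.
  transitivity (A1 - c * (A1 * (root_lo A1 A2 A3 + root_hi A1 A2 A3))
                + c ^ 2 * (A1 * (root_lo A1 A2 A3 * root_hi A1 A2 A3))).
  - ring.
  - rewrite root_lo_add_root_hi, (root_lo_mul_root_hi hD); ring.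
Qed.

End QuadraticRoots.

Lemma fx_on_isocline (a c p q x : R) : 1 + q * (1 - c * x) <> 0 ->
  fx a p q x (1 - c * x) * (1 + q * (1 - c * x)) =
  - x * (Acoef1 a c q * x ^ 2 + Acoef2 a c p q * x + Acoef3 a p q).
Proof. intro hd; unfold fx, Acoef1, Acoef2, Acoef3; field; exact hd. Qed.

Lemma pos_equilibrium_iff_isocline (a b c p q x y : R) : b <> 0 -> 0 <= q ->
  pos_equilibrium a b c p q x y <->
  y = 1 - c * x /\ 0 < x /\ 0 < y /\
  Acoef1 a c q * x ^ 2 + Acoef2 a c p q * x + Acoef3 a p q = 0.
Proof.
  intros hb hq; unfold pos_equilibrium; split.
  - intros (hx & hy & hfx & hfy).
    assert (ey : y = 1 - c * x).
    { unfold fy in hfy; destruct (Rmult_integral _ _ hfy) as [h | h]; [| lra].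
      destruct (Rmult_integral _ _ h); [contradiction | lra]. }
    subst y.
    assert (hd : 1 + q * (1 - c * x) <> 0) by nra.
    pose proof (fx_on_isocline a c p q x hd) as hiso.
    rewrite hfx, Rmult_0_l in hiso.
    repeat split; try lra.
    symmetry in hiso; destruct (Rmult_integral _ _ hiso); lra.
  - intros (-> & hx & hy & hQ).
    assert (hd : 1 + q * (1 - c * x) <> 0) by nra.
    pose proof (fx_on_isocline a c p q x hd) as hiso.
    rewrite hQ, Rmult_0_r in hiso.
    repeat split; try lra.
    + destruct (Rmult_integral _ _ hiso); [assumption | contradiction].
    + unfold fy; ring.
Qed.

Lemma xstar1_eq_root_lo (a c p q : R) :
  xstar1 a c p q = root_lo (Acoef1 a c q) (Acoef2 a c p q) (Acoef3 a p q).
Proof. reflexivity. Qed.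

Lemma xstar2_eq_root_hi (a c p q : R) :
  xstar2 a c p q = root_hi (Acoef1 a c q) (Acoef2 a c p q) (Acoef3 a p q).
Proof. reflexivity. Qed.

Lemma Acoef_reciprocal (a c p q : R) :
  Acoef1 a c q + c * Acoef2 a c p q + c ^ 2 * Acoef3 a p q = (1 - c) * (1 - p * c).
Proof. unfold Acoef1, Acoef2, Acoef3; ring. Qed.

Section PositiveEquilibria.

Variables a b c p q : R.
Hypotheses (ha : 0 < a) (hb : 0 < b) (hc : 0 < c) (hq : 0 < q) (hp : 0 < p).

Notation x1 := (xstar1 a c p q).
Notation x2 := (xstar2 a c p q).

Lemma Acoef1_pos : 0 < Acoef1 a c q.
Proof. unfold Acoef1; assert (0 < a * c ^ 2 * q) by (repeat apply Rmult_lt_0_compat; nra); lra. Qed.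

Lemma Acoef2_neg : Acoef2 a c p q < 0.
Proof.
  unfold Acoef2.
  assert (0 < a * c * q) by (repeat apply Rmult_lt_0_compat; lra).
  assert (0 < a * c) by (apply Rmult_lt_0_compat; lra).
  lra.
Qed.

Lemma Acoef3_pos : 0 < Acoef3 a p q.
Proof. unfold Acoef3; nra. Qed.

Lemma xstar1_lt_xstar2 : 0 < Delta_disc a c p q -> x1 < x2.
Proof. exact (root_lo_lt_root_hi _ _ _ Acoef1_pos). Qed.

Lemma xstar1_lt_1 : 0 < 2 * Acoef1 a c q + Acoef2 a c p q -> x1 < 1.
Proof. exact (root_lo_lt_1 _ _ _ Acoef1_pos). Qed.

Hypothesis hD : 0 <= Delta_disc a c p q.

Lemma xstar1_pos : 0 < x1.
Proof. exact (root_lo_pos _ _ _ Acoef1_pos Acoef2_neg Acoef3_pos hD). Qed.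

Lemma isocline_product : Acoef1 a c q * (1 - c * x1) * (1 - c * x2) = (1 - c) * (1 - p * c).
Proof. rewrite <- (Acoef_reciprocal a c p q); exact (reciprocal_quadratic_factor _ _ _ Acoef1_pos c hD). Qed.

Lemma pos_equilibrium_iff_root (x y : R) :
  pos_equilibrium a b c p q x y <-> (x = x1 \/ x = x2) /\ 0 < 1 - c * x /\ y = 1 - c * x.
Proof.
  rewrite pos_equilibrium_iff_isocline by lra.
  rewrite (quadratic_eq0_iff _ _ _ Acoef1_pos x hD), <- xstar1_eq_root_lo, <- xstar2_eq_root_hi.
  pose proof xstar1_pos.
  pose proof (root_lo_le_root_hi _ (Acoef2 a c p q) (Acoef3 a p q) Acoef1_pos) as h12.
  rewrite <- xstar1_eq_root_lo, <- xstar2_eq_root_hi in h12.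
  split.
  - intros (-> & _ & hy & hroot); auto.
  - intros (hroot & hy & ->); repeat split; auto.
    destruct hroot as [-> | ->]; lra.
Qed.

Lemma pos_equilibria_Estar1 :
  0 < 1 - c * x1 -> 1 - c * x2 <= 0 ->
  forall x y, pos_equilibrium a b c p q x y <-> (x, y) = Estar1 a c p q.
Proof.
  intros h1 h2 x y; rewrite pos_equilibrium_iff_root; unfold Estar1.
  rewrite pair_equal_spec; split.
  - intros ([-> | ->] & hy & ->); [auto | lra].
  - intros (-> & ->); auto.
Qed.

Lemma pos_equilibria_Estar12 :
  0 < 1 - c * x1 -> 0 < 1 - c * x2 ->
  forall x y, pos_equilibrium a b c p q x y <->
    (x, y) = Estar1 a c p q \/ (x, y) = Estar2 a c p q.
Proof.
  intros h1 h2 x y; rewrite pos_equilibrium_iff_root; unfold Estar1, Estar2.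
  rewrite !pair_equal_spec; split.
  - intros ([-> | ->] & hy & ->); auto.
  - intros [(-> & ->) | (-> & ->)]; auto.
Qed.

Lemma pos_equilibria_Estar3 :
  Delta_disc a c p q = 0 -> 0 < 1 - c * x1 ->
  forall x y, pos_equilibrium a b c p q x y <-> (x, y) = Estar3 a c p q.
Proof.
  intros hD0 h1 x y.
  assert (e1 : x1 = xstar3 a c p q) by exact (root_lo_disc0 _ _ _ Acoef1_pos hD0).
  assert (e2 : x2 = xstar3 a c p q) by exact (root_hi_disc0 _ _ _ Acoef1_pos hD0).
  rewrite pos_equilibrium_iff_root; unfold Estar3.
  rewrite pair_equal_spec, e2, <- e1; split.
  - intros ([-> | ->] & hy & ->); auto.
  - intros (-> & ->); auto.
Qed.

Lemma isocline_signs_c_lt_1 :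
  0 < 2 * Acoef1 a c q + Acoef2 a c p q -> c < 1 -> p < 1 ->
  0 < 1 - c * x1 /\ 0 < 1 - c * x2.
Proof.
  intros hv hc1 hp1.
  pose proof (xstar1_lt_1 hv); pose proof xstar1_pos.
  assert (h1 : 0 < 1 - c * x1) by nra.
  split; [exact h1 |].
  assert (0 < (1 - c) * (1 - p * c)) by (apply Rmult_lt_0_compat; nra).
  rewrite <- isocline_product in *.
  pose proof Acoef1_pos; destruct (Rlt_or_le 0 (1 - c * x2)) as [| h2]; [assumption |].
  assert (0 < Acoef1 a c q * (1 - c * x1)) by (apply Rmult_lt_0_compat; assumption).
  nra.
Qed.

Lemma isocline_signs_c_eq_1 :
  0 < 2 * Acoef1 a c q + Acoef2 a c p q -> c = 1 ->
  0 < 1 - c * x1 /\ 1 - c * x2 = 0.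
Proof.
  intros hv hc1.
  pose proof (xstar1_lt_1 hv); pose proof Acoef1_pos.
  pose proof isocline_product as hprod.
  replace (1 - c) with 0 in hprod by lra; rewrite Rmult_0_l in hprod.
  assert (h1 : 0 < 1 - c * x1) by nra.
  split; [exact h1 |].
  destruct (Rmult_integral _ _ hprod) as [h | h]; [| exact h].
  destruct (Rmult_integral _ _ h); lra.
Qed.

Lemma isocline_signs_c_gt_1 :
  x1 < x2 -> 1 < c -> p * c < 1 ->
  0 < 1 - c * x1 /\ 1 - c * x2 < 0.
Proof.
  intros h12 hc1 hpc.
  pose proof Acoef1_pos.
  assert (hneg : (1 - c) * (1 - p * c) < 0) by nra.
  rewrite <- isocline_product in hneg.
  assert (1 - c * x2 < 1 - c * x1) by nra.
  destruct (Rlt_or_le 0 (1 - c * x1)) as [h1 | h1].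
  - split; [exact h1 |].
    destruct (Rlt_or_le (1 - c * x2) 0) as [| h2]; [assumption |].
    assert (0 <= Acoef1 a c q * (1 - c * x1)) by (apply Rmult_le_pos; lra).
    nra.
  - assert (0 <= Acoef1 a c q * (1 - c * x1) * (1 - c * x2)).
    { rewrite Rmult_assoc; apply Rmult_le_pos; [lra | nra]. }
    lra.
Qed.

End PositiveEquilibria.

Lemma mul_lt_1_of_lt_inv (p c : R) : 0 < c -> p < 1 / c -> p * c < 1.
Proof.
  intros hc h; apply (Rmult_lt_compat_r c) in h; [| exact hc].
  replace (1 / c * c) with 1 in h by (field; lra); exact h.
Qed.

Theorem theorem3p1 (a b c p q : R)
  (ha : 0 < a) (hb : 0 < b) (hc : 0 < c) (hq : 0 < q) (hp0 : 0 < p) (hp1 : p < 1) :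
  (* Case I (1)(a) *)
  (Delta_disc a c p q > 0 -> 2 * Acoef1 a c q + Acoef2 a c p q > 0 -> c < 1 ->
     Estar1 a c p q <> Estar2 a c p q /\
     forall x y, pos_equilibrium a b c p q x y <-> ((x, y) = Estar1 a c p q \/ (x, y) = Estar2 a c p q)) /\
  (* Case I (1)(b) *)
  (Delta_disc a c p q > 0 -> 2 * Acoef1 a c q + Acoef2 a c p q > 0 -> c = 1 ->
     forall x y, pos_equilibrium a b c p q x y <-> (x, y) = Estar1 a c p q) /\
  (* Case I (1)(c) *)
  (Delta_disc a c p q > 0 -> 2 * Acoef1 a c q + Acoef2 a c p q > 0 ->
     1 < c -> c <= 1 / q + 1 -> p < 1 / c ->
     forall x y, pos_equilibrium a b c p q x y <-> (x, y) = Estar1 a c p q) /\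
  (* Case I (2) *)
  (Delta_disc a c p q > 0 -> 2 * Acoef1 a c q + Acoef2 a c p q < 0 ->
     1 < c -> c < 1 / q + 1 -> p < 1 / c ->
     forall x y, pos_equilibrium a b c p q x y <-> (x, y) = Estar1 a c p q) /\
  (* Case I (3) *)
  (Delta_disc a c p q > 0 -> 2 * Acoef1 a c q + Acoef2 a c p q = 0 ->
     1 < c -> p < 1 / c ->
     forall x y, pos_equilibrium a b c p q x y <-> (x, y) = Estar1 a c p q) /\
  (* Case II *)
  (Delta_disc a c p q = 0 -> 2 * Acoef1 a c q + Acoef2 a c p q > 0 -> c < 1 ->
     forall x y, pos_equilibrium a b c p q x y <-> (x, y) = Estar3 a c p q).
Proof.
  assert (c_gt_1 : Delta_disc a c p q > 0 -> 1 < c -> p < 1 / c ->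
    forall x y, pos_equilibrium a b c p q x y <-> (x, y) = Estar1 a c p q).
  { intros hD hc1 hpc.
    destruct (isocline_signs_c_gt_1 a c p q ha hc hq (Rlt_le _ _ hD)
                (xstar1_lt_xstar2 a c p q ha hc hq hD) hc1 (mul_lt_1_of_lt_inv p c hc hpc)).
    apply pos_equilibria_Estar1; auto; lra. }
  split; [| split; [| split; [| split; [| split]]]]; intros hD hv hc1;
    try (intros; apply c_gt_1; assumption).
  - destruct (isocline_signs_c_lt_1 a c p q ha hc hq hp0 (Rlt_le _ _ hD) hv hc1 hp1).
    pose proof (xstar1_lt_xstar2 a c p q ha hc hq hD).
    split.
    + unfold Estar1, Estar2; rewrite pair_equal_spec; lra.
    + apply pos_equilibria_Estar12; auto; lra.
  - destruct (isocline_signs_c_eq_1 a c p q ha hc hq (Rlt_le _ _ hD) hv hc1).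
    apply pos_equilibria_Estar1; auto; lra.
  - assert (hD' : 0 <= Delta_disc a c p q) by lra.
    destruct (isocline_signs_c_lt_1 a c p q ha hc hq hp0 hD' hv hc1 hp1).
    apply pos_equilibria_Estar3; auto.
Qed.
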